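(* Let $X$ be a sieve-complete space and let $F\colon(\mathcal{K}(X),\tau^+_V)\to\mathcal{K}(Y)$ be upper semi-continuous and set tri-quotient. Then $Y$ is sieve-complete.
   Context: All spaces are completely regular. $\mathcal{K}(X)$ is the set of compact subsets of $X$; $\tau^+_V$ is the upper Vietoris topology on $\mathcal{K}(X)$, generated by the sets $\{H\in\mathcal{K}(X):H\subset U\}$, $U$ open in $X$. $F$ upper semi-continuous means: for every $K$ and every open $V\supset F(K)$ there is a $\tau^+_V$-neighborhood $\mathcal{O}$ of $K$ with $F(H)\subset V$ for all $H\in\mathcal{O}$. $F$ is set tri-quotient if there is $s\colon\mathcal{T}(X)\to\mathcal{T}(Y)$ (maps from open sets of $X$ to open sets of $Y$) with: (str1) $s(U)\subset\bigcup\{F(K):K\in\mathcal{K}(X),K\subset U\}$; (str2) $s(X)=Y$; (str3) $U\subset V\Rightarrow s(U)\subset s(V)$; (str4) if $y\in s(U)$ and $\mathcal{W}$ is a cover of $\bigcup\{K\in F^{-1}(y):K\subset U\}$ by open subsets of $X$, then $y\in s(\bigcup\mathcal{E})$ for some finite $\mathcal{E}\subset\mathcal{W}$, where $F^{-1}(y)=\{K:y\in F(K)\}$. A sieve on $X$ is a sequence of open covers $\{U_\alpha:\alpha\in A_n\}_{n\in\mathbb{N}}$ with maps $\pi_n\colon A_{n+1}\to A_n$ such that $U_\alpha=\bigcup\{U_\beta:\beta\in\pi_n^{-1}(\alpha)\}$; it is complete if for every sequence $(\alpha_n)$ with $\alpha_n\in A_n$, $\pi_n(\alpha_{n+1})=\alpha_n$,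 every filter base meshing with $\{U_{\alpha_n}\}$ has a cluster point; a space with a complete sieve is sieve-complete. *)

From Stdlib Require Rdefinitions.
From HB Require Import structures.
From mathcomp Require Import all_boot all_order all_algebra.
From mathcomp Require Import all_classical all_reals all_analysis.
From mathcomp Require Import Rstruct Rstruct_topology.
Set Implicit Arguments. Unset Strict Implicit. Unset Printing Implicit Defensive.
Import Order.TTheory GRing.Theory Num.Theory.
Local Open Scope classical_set_scope.

Definition completely_regular (X : topologicalType) : Prop :=
  hausdorff_space X /\
  forall (A : set X) (x : X), closed A -> ~ A x ->
    exists f : X -> Rdefinitions.R,
      continuous f /\ f x = 0%R /\ (forall a, A a -> f a = 1%R).

Record cpt (X : topologicalType) := Cpt {
  cset :> set X;
  cset_compact : compact cset }.

(* Upper semi-continuity of F : (K(X), tau^+_V) -> K(Y).  The sets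
   {H in K(X) | H subset U}, U open, form a base of tau^+_V, so a
   tau^+_V-neighbourhood of K contains such a set with K subset U. *)
Definition usc (X Y : topologicalType) (F : cpt X -> cpt Y) : Prop :=
  forall (K : cpt X) (V : set Y), open V -> (F K : set Y) `<=` V ->
    exists U : set X, [/\ open U, (K : set X) `<=` U &
      forall H : cpt X, (H : set X) `<=` U -> (F H : set Y) `<=` V].

Definition Fimg (X Y : topologicalType) (F : cpt X -> cpt Y) (U : set X)
  : set Y :=
  [set y | exists K : cpt X, (K : set X) `<=` U /\ (F K : set Y) y].

Definition Fpre (X Y : topologicalType) (F : cpt X -> cpt Y) (y : Y)
  (U : set X) : set X :=
  [set x | exists K : cpt X, [/\ (F K : set Y) y, (K : set X) `<=` U & (K : set X) x]].

(* F is set tri-quotient: s maps open sets of X to open sets of Y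
   (only its values on open sets matter). *)
Definition set_tri_quotient (X Y : topologicalType) (F : cpt X -> cpt Y)
  : Prop :=
  exists s : set X -> set Y,
    [/\ (forall U, open U -> open (s U)),
        (* str1 *) (forall U, open U -> s U `<=` Fimg F U),
        s setT = setT,
        (forall U V, open U -> open V -> U `<=` V -> s U `<=` s V) &
        (* str4 *) (forall (U : set X) (y : Y) (W : set (set X)),
            open U -> s U y ->
            (forall w, W w -> open w) ->
            Fpre F y U `<=` \bigcup_(w in W) w ->
            exists E : set (set X),
              [/\ finite_set E, E `<=` W & s (\bigcup_(e in E) e) y])].

Definition is_sieve (X : topologicalType) (A : nat -> Type)
  (U : forall n, A n -> set X) (pi : forall n, A n.+1 -> A n) : Prop :=
  [/\ (forall n a, open (U n a)),
      (forall n, \bigcup_(a in [set: A n]) U n a = setT) &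
      (forall n a, U n a = \bigcup_(b in [set b | pi n b = a]) U n.+1 b)].

Definition filter_base (X : Type) (B : set (set X)) : Prop :=
  [/\ B !=set0, (forall b, B b -> b !=set0) &
      (forall b1 b2, B b1 -> B b2 -> exists2 b3, B b3 & b3 `<=` b1 `&` b2)].

Definition meshes (X : Type) (B : set (set X)) (C : set (set X)) : Prop :=
  forall b c, B b -> C c -> b `&` c !=set0.

Definition cluster_point (X : topologicalType) (B : set (set X)) (x : X)
  : Prop := forall b, B b -> closure b x.

Definition complete_sieve (X : topologicalType) (A : nat -> Type)
  (U : forall n, A n -> set X) (pi : forall n, A n.+1 -> A n) : Prop :=
  is_sieve U pi /\
  forall alpha : forall n, A n, (forall n, pi n (alpha n.+1) = alpha n) ->
    forall B : set (set X), filter_base B ->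
      meshes B [set U n (alpha n) | n in [set: nat]] ->
      exists x, cluster_point B x.

Definition sieve_complete (X : topologicalType) : Prop :=
  exists (A : nat -> Type) (U : forall n, A n -> set X)
         (pi : forall n, A n.+1 -> A n), complete_sieve U pi.

(* Let (U, pi) be a complete sieve on X and s a set tri-quotient selection for
   F.  Index a sieve on Y by the finite subtrees E = (E_0, ..., E_n) of the
   index tree of (U, pi), the member indexed by E being s(U(E_n)), where U(E_n)
   is the union of the U_a for a in E_n; condition (str4) is exactly what makes
   this family a sieve.
   For completeness, let B be a filter base meshing with s(U(E_n)) along a
   branch (E_n).  By (str1) every b in B meets some F(K) with K a compact subset
   of U(E_n); the closures of the unions of all such K intersect in a set K0.
   A Koenig argument on the finitely branching tree (E_n), together with
   completeness of (U, pi), shows that K0 is compact and that every open W containing K0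
   contains such a K.  Upper semicontinuity of F then makes F(K0) meet the
   closure of every member of B, and compactness of F(K0) yields a cluster
   point of B. *)

From mathcomp Require Import all_boot all_classical all_analysis.
From mathcomp Require Import all_algebra Rstruct_topology lra finmap zify.
From Stdlib Require Import Eqdep_dec Lia.
From Stdlib Require List.
Unset Printing Implicit Defensive.
Local Open Scope classical_set_scope.

Lemma completely_regular_regular {X : topologicalType} :
  completely_regular X -> regular_space X.
Proof.
move=> [_ creg] x; apply/regular_openP => C cC Cx.
have [f [cf [fx0 f1]]] := creg C x cC Cx.
exists (f @^-1` [set r | (r < 1/2)%R]), (f @^-1` [set r | (1/2 < r)%R]).
split.
- by apply: (proj1 (continuousP f) cf [set r | (r < 1/2)%R]); exact: open_lt.
- by apply: (proj1 (continuousP f) cf [set r | (1/2 < r)%R]); exact: open_gt.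
- by rewrite /= fx0; lra.
- by move=> a Ca; rewrite /= f1 //; lra.
- by apply/seteqP; split => // z /= []; lra.
Qed.

Lemma compact_filter_base_cluster {Y : topologicalType} {C : set Y}
    {B : set (set Y)} :
  compact C -> filter_base B -> (forall b, B b -> C `&` closure b !=set0) ->
  exists y, cluster_point B y.
Proof.
move=> cC [[b0 Bb0] _ Bdir] CB.
pose T b := C `&` closure b.
have T_mono u v : u `<=` v -> T u `<=` T v.
  by move=> uv z [Cz uz]; split => //; exact: closureS uv _ uz.
have GF : ProperFilter (filter_from B T).
  apply: filter_from_proper CB; apply: filter_from_filter; first by exists b0.
  move=> i j Bi Bj; have [k Bk kij] := Bdir i j Bi Bj.
  by exists k => // z Tz; split; apply: T_mono Tz => t /kij [].
have [y [_ Gy]] := cC _ GF (ex_intro2 _ _ b0 Bb0 (fun z (Tz : T b0 z) => Tz.1)).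
exists y => b Bb; move: Gy; rewrite clusterE => /(_ (T b)) Gy.
have /(closureS (fun z (Tz : T b z) => Tz.2)) : closure (T b) y.
  by apply: Gy; exists b.
by rewrite -(proj1 (closure_id _) (@closed_closure _ b)).
Qed.

Lemma usc_meets_closure {X Y : topologicalType} {F : cpt X -> cpt Y}
    {K0 : cpt X} {b : set Y} :
  usc F ->
  (forall W, open W -> (K0 : set X) `<=` W ->
     exists K : cpt X, (K : set X) `<=` W /\ (F K : set Y) `&` b !=set0) ->
  (F K0 : set Y) `&` closure b !=set0.
Proof.
move=> uscF hitW; apply: contrapT => nmeet.
have FK0b : (F K0 : set Y) `<=` ~` closure b by move=> y Fy cy; apply: nmeet; exists y.
have [W [oW K0W FW]] := uscF K0 _ (closed_openC (@closed_closure _ b)) FK0b.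
have [K [KW [y [Fy yb]]]] := hitW W oW K0W.
exact: FW K KW y Fy (subset_closure yb).
Qed.

Lemma finite_directed_pigeonhole (T I : Type) (le : I -> I -> Prop)
    (D : set I) (Q : T -> I -> Prop) (S : list T) :
  D !=set0 -> (forall i j, D i -> D j -> exists2 k, D k & le i k /\ le j k) ->
  (forall x i j, le i j -> Q x j -> Q x i) ->
  (forall i, D i -> exists2 x, List.In x S & Q x i) ->
  exists2 x, List.In x S & forall i, D i -> Q x i.
Proof.
move=> [i0 Di0] Ddir Qanti QS; apply: contrapT => noneQ.
suff [j Dj Sj] : exists2 j, D j & forall x, List.In x S -> ~ Q x j.
  by have [x Sx Qx] := QS j Dj; exact: Sj x Sx Qx.
have {QS} : forall x, List.In x S -> exists2 i, D i & ~ Q x i.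
  move=> x Sx; apply: contrapT => allQ; apply: noneQ; exists x => // i Di.
  by apply: contrapT => nQ; apply: allQ; exists i.
elim: S {noneQ} => [|x S IH] hS; first by exists i0.
have [j Dj Sj] := IH (fun y Sy => hS y (or_intror Sy)).
have [i Di nQ] := hS x (or_introl erefl).
have [k Dk [ik jk]] := Ddir i j Di Dj.
exists k => // y [<-|Sy] Qy; first exact: nQ (Qanti _ _ _ ik Qy).
exact: Sj y Sy (Qanti _ _ _ jk Qy).
Qed.

Section Sieve.
Variables (X : topologicalType) (A : nat -> Type) (U : forall n, A n -> set X)
  (pi : forall n, A n.+1 -> A n).
Hypothesis sieveU : is_sieve U pi.
Local Set Implicit Arguments.
Local Unset Strict Implicit.

Lemma sieve_open n a : open (U n a).
Proof. by case: sieveU. Qed.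

Lemma sieve_pi n b : U n.+1 b `<=` U n (pi n b).
Proof. by case: sieveU => _ _ Upi x Ux; rewrite (Upi n (pi n b)); exists b. Qed.

Definition UE (E : forall n, list (A n)) n :=
  \bigcup_(a in [set a | List.In a (E n)]) U n a.

Lemma UE_open E n : open (UE E n).
Proof. by apply: bigcup_open => a _; exact: sieve_open. Qed.

Definition node := {k : nat & A k}.
Definition lev (x : node) := projT1 x.
Definition Un (x : node) := U (projT1 x) (projT2 x).
Definition par (x : node) : node :=
  match x with existT 0 a => existT _ 0 a | existT k.+1 a => existT _ k (pi k a) end.

Lemma existT_inj n (a b : A n) : existT A n a = existT A n b -> a = b.
Proof. exact: (inj_pair2_eq_dec _ PeanoNat.Nat.eq_dec). Qed.

Lemma node_lev (x : node) k : lev x = k -> exists a : A k, x = existT A k a.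
Proof. by case: x => k' a /= <-; exists a. Qed.

Lemma lev_iter j x : lev (iter j par x) = lev x - j.
Proof.
elim: j => [|j IH]; first by rewrite subn0.
by rewrite iterS subnS -IH; case: (iter j par x) => -[|k] a.
Qed.

Lemma Un_iter j x : Un x `<=` Un (iter j par x).
Proof.
elim: j => [//|j IH]; rewrite iterS; apply: subset_trans IH _.
by case: (iter j par x) => -[|k] a //; exact: sieve_pi.
Qed.

Section FiniteSubtree.
Variable E : forall n, list (A n).
Hypothesis E_pi : forall n b, List.In b (E n.+1) -> List.In (pi n b) (E n).

Lemma UE_mono m n : (n <= m)%N -> UE E m `<=` UE E n.
Proof.
elim: m => [|m IH]; first by rewrite leqn0 => /eqP ->.
rewrite leq_eqVlt => /orP [/eqP -> //|/IH]; apply: subset_trans.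
by move=> x [a Ea Ux]; exists (pi m a); [exact: E_pi | exact: sieve_pi].
Qed.

Definition En (x : node) := List.In (projT2 x) (E (projT1 x)).

Lemma En_iter j x : En x -> En (iter j par x).
Proof.
move=> Ex; elim: j => [//|j]; rewrite iterS.
by case: (iter j par x) => -[|k] a //; exact: E_pi.
Qed.

Variable D : set (set X).
Hypothesis D_base : filter_base D.
Hypothesis D_levels : forall k, exists2 d, D d & d `<=` UE E k.

Definition reach (x : node) (d : set X) m := exists y,
  [/\ En y, lev y = (lev x + m)%N, iter m par y = x & d `&` Un y !=set0].

Definition good x := forall d, D d -> forall m, reach x d m.

Lemma reach_antitone x d d' m m' :
  d' `<=` d -> (m <= m')%N -> reach x d' m' -> reach x d m.
Proof.
move=> dd' mm' [y [Ey ly yx [p [d'p yp]]]].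
exists (iter (m' - m) par y); split.
- exact: En_iter.
- by rewrite lev_iter ly; lia.
- by rewrite -iterD subnKC.
- by exists p; split; [exact: dd' | exact: Un_iter].
Qed.

Lemma good_pigeonhole (S : list node) :
  (forall d, D d -> forall m, exists2 x, List.In x S & reach x d m) ->
  exists2 x, List.In x S & good x.
Proof.
case: D_base => [[d0 Dd0] _ Ddir] SD.
pose le (i j : set X * nat) := j.1 `<=` i.1 /\ (i.2 <= j.2)%N.
have le_directed i j : D i.1 -> D j.1 ->
    exists2 k, D k.1 & le i k /\ le j k.
  move=> Di Dj; have [k Dk kij] := Ddir _ _ Di Dj.
  exists (k, maxn i.2 j.2) => //; split; split; rewrite ?leq_maxl ?leq_maxr //.
  - by move=> z /kij [].
  - by move=> z /kij [].
have [x Sx xgood] := @finite_directed_pigeonhole _ _ le [set i | D i.1]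
  (fun x i => reach x i.1 i.2) S (ex_intro _ (d0, 0%N) Dd0) le_directed
  (fun x i j '(conj ji ij) => @reach_antitone x _ _ _ _ ji ij) (fun i Di => SD i.1 Di i.2).
by exists x => // d Dd m; exact: xgood (d, m) Dd.
Qed.

Lemma good_root : exists x, lev x = 0%N /\ good x.
Proof.
suff [x /List.in_map_iff [a [<- _]] xgood] :
    exists2 x, List.In x (List.map (existT A 0%N) (E 0)) & good x.
  by exists (existT A 0%N a).
apply: good_pigeonhole => d Dd m; case: D_base => _ Dne Ddir.
have [dm Ddm dmE] := D_levels m; have [d' Dd' d'd] := Ddir d dm Dd Ddm.
have [p d'p] := Dne d' Dd'; have [a Ea Up] := dmE p (d'd p d'p).2.
have [r rE] : exists r : A 0%N, iter m par (existT A m a) = existT A 0%N r.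
  by apply: node_lev; rewrite lev_iter subnn.
exists (existT A 0%N r).
  by apply: List.in_map; have := En_iter m (x := existT A m a) Ea; rewrite rE.
exists (existT A m a); split => //.
by exists p; split => //; exact: (d'd p d'p).1.
Qed.

Lemma good_child x : good x -> exists z, [/\ good z, lev z = (lev x).+1 & par z = x].
Proof.
case: x => n a xgood.
suff [z /List.in_map_iff [b [<- /List.filter_In [_ /asboolP ba]]] zgood] :
    exists2 z, List.In z (List.map (existT A n.+1)
      (List.filter (fun b => `[< pi n b = a >]) (E n.+1))) & good z.
  by exists (existT A n.+1 b); rewrite /= ba.
apply: good_pigeonhole => d Dd m; have [y [Ey ly yx dy]] := xgood d Dd m.+1.
have [b zb] : exists b : A n.+1, iter m par y = existT A n.+1 b.
  by apply: node_lev; rewrite lev_iter ly /=; lia.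
have pb : pi n b = a.
  by apply: existT_inj; move: yx; rewrite iterS zb.
exists (existT A n.+1 b).
  apply: List.in_map; apply/List.filter_In; split; last exact/asboolP.
  by have := En_iter m Ey; rewrite zb.
by exists y; split => //; rewrite ly /= addSnnS.
Qed.

Lemma finite_subtree_cluster : complete_sieve U pi -> exists x, cluster_point D x.
Proof.
move=> [_ completeU].
have next_ex x : exists z, good x -> [/\ good z, lev z = (lev x).+1 & par z = x].
  by case: (pselect (good x)) => [/good_child [z ?]|ngx]; [exists z | exists x].
have [next nextP] := choice next_ex.
have [x0 [lev0 good0]] := good_root.
pose xs n := iter n next x0.
have xsP n : good (xs n) /\ lev (xs n) = n.
  elim: n => [//|n [gn ln]]; have [g l _] := nextP _ gn.
  by rewrite /xs iterS -/(xs n); split => //; rewrite l ln.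
have xs_par n : par (xs n.+1) = xs n.
  by rewrite /xs iterS; have [] := nextP _ (xsP n).1.
pose alpha n := projT1 (cid (node_lev (xsP n).2)).
have xs_alpha n : xs n = existT A n (alpha n) := projT2 (cid (node_lev (xsP n).2)).
apply: (completeU alpha) => [n||d _ Dd [n _ <-]] //.
  by apply: existT_inj; rewrite -xs_alpha -xs_par xs_alpha.
have [y [_ _ /= -> [p [dp yp]]]] := (xsP n).1 d Dd 0%N.
by exists p; split => //; move: yp; rewrite xs_alpha.
Qed.

End FiniteSubtree.
End Sieve.

Definition cpt0 (X : topologicalType) : cpt X := Cpt (@compact0 X).

Lemma cpt_set0 {X : topologicalType} {K : cpt X} : (K : set X) = set0 -> K = cpt0 X.
Proof. by case: K => K cK /= K0; subst K; congr Cpt; exact: Prop_irrelevance. Qed.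

Section ImageCluster.
Variables (X Y : topologicalType) (F : cpt X -> cpt Y).
Hypothesis regX : regular_space X.
Hypothesis uscF : usc F.
Variables (A : nat -> Type) (U : forall n, A n -> set X)
  (pi : forall n, A n.+1 -> A n).
Hypothesis completeU : complete_sieve U pi.
Variable E : forall n, list (A n).
Hypothesis E_pi : forall n b, List.In b (E n.+1) -> List.In (pi n b) (E n).
Variable s : set X -> set Y.
Hypothesis s_img : forall V, open V -> s V `<=` Fimg F V.
Variable B : set (set Y).
Hypothesis B_base : filter_base B.
Hypothesis B_mesh : forall b n, B b -> b `&` s (UE U E n) !=set0.
Local Set Implicit Arguments.
Local Unset Strict Implicit.

Section NonDegenerate.
Variable b0 : set Y.
Hypothesis Bb0 : B b0.
Hypothesis F0b0 : ~ ((F (cpt0 X) : set Y) `&` b0 !=set0).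

Definition hit b n := [set x | exists K : cpt X, [/\ (K : set X) `<=` UE U E n,
  (F K : set Y) `&` (b `&` b0) !=set0 & (K : set X) x]].

Lemma hit_sub b n : hit b n `<=` UE U E n.
Proof. by move=> x [K [KU _ Kx]]; exact: KU. Qed.

Lemma hit_mono b b' n n' : b' `<=` b -> (n <= n')%N -> hit b' n' `<=` hit b n.
Proof.
move=> bb' nn' x [K [KU [y [Fy [b'y b0y]]] Kx]]; exists K; split => //.
- exact: subset_trans KU (UE_mono completeU.1 E_pi nn').
- by exists y; split => //; split => //; exact: bb'.
Qed.

Lemma hit_neq0 b n : B b -> hit b n !=set0.
Proof.
case: B_base => _ _ Bdir Bb; have [b' Bb' b'bb0] := Bdir b b0 Bb Bb0.
have [y [b'y sy]] := B_mesh b' n Bb'.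
have [K [KU Fy]] := s_img _ (UE_open completeU.1 E n) y sy.
have [K0|/eqP/set0P [x Kx]] := pselect ((K : set X) = set0).
  by case: F0b0; exists y; split; [rewrite -(cpt_set0 K0) | exact: (b'bb0 y b'y).2].
by exists x, K; split => //; exists y; split => //; exact: b'bb0.
Qed.

Lemma hit_cluster (Z : set (set X)) : Z !=set0 ->
  (forall z1 z2, Z z1 -> Z z2 -> exists2 z3, Z z3 & z3 `<=` z1 `&` z2) ->
  (forall b n z, B b -> Z z -> hit b n `&` z !=set0) ->
  exists x, forall b n z, B b -> Z z -> closure (hit b n `&` z) x.
Proof.
move=> [z0 Zz0] Zdir hitZ; case: B_base => [[b1 Bb1] _ Bdir].
pose D := [set d | exists b n z, [/\ B b, Z z & d = hit b n `&` z]].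
have D_base : filter_base D.
  split; first by exists (hit b1 0 `&` z0), b1, 0%N, z0.
    by move=> d [b [n [z [Bb Zz ->]]]]; exact: hitZ.
  move=> _ _ [c1 [n1 [z1 [Bc1 Zz1 ->]]]] [c2 [n2 [z2 [Bc2 Zz2 ->]]]].
  have [c3 Bc3 c3c] := Bdir c1 c2 Bc1 Bc2; have [z3 Zz3 z3z] := Zdir z1 z2 Zz1 Zz2.
  exists (hit c3 (maxn n1 n2) `&` z3); first by exists c3, (maxn n1 n2), z3.
  move=> x [hx /z3z [z1x z2x]]; split; split => //.
  - by apply: hit_mono hx; [move=> t /c3c [] | exact: leq_maxl].
  - by apply: hit_mono hx; [move=> t /c3c [] | exact: leq_maxr].
have D_levels k : exists2 d, D d & d `<=` UE U E k.
  by exists (hit b1 k `&` z0); [exists b1, k, z0 | move=> x [/hit_sub]].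
have [x Dx] := finite_subtree_cluster completeU.1 E_pi D_base D_levels completeU.
by exists x => b n z Bb Zz; apply: Dx; exists b, n, z.
Qed.

Definition core := [set x | forall b n, B b -> closure (hit b n) x].

Lemma core_cover W b : open W -> core `<=` W -> B b ->
  exists K : cpt X, (K : set X) `<=` W /\ (F K : set Y) `&` b !=set0.
Proof.
move=> oW coreW Bb; apply: contrapT => noK; case: B_base => _ _ Bdir.
have [|||x xcl] := @hit_cluster [set ~` W].
- by exists (~` W).
- by move=> _ _ -> ->; exists (~` W) => // t Wt.
- move=> b' n _ Bb' ->; have [b'' Bb'' b''b'b] := Bdir b' b Bb' Bb.
  have [_ [K [KU [y [Fy [b''y b0y]]] _]]] := hit_neq0 n Bb''.
  have /existsNP [x /not_implyP [Kx nWx]] : ~ (K : set X) `<=` W.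
    by move=> KW; apply: noK; exists K; split => //; exists y; split => //; case: (b''b'b y b''y).
  exists x; split => //; exists K; split => //.
  by exists y; split => //; split => //; case: (b''b'b y b''y).
have Wx : W x.
  by apply: coreW => b' n Bb'; apply: closureS (xcl b' n _ Bb' erefl) => t [].
have /(closureS (fun t (ht : (hit b 0 `&` ~` W) t) => ht.2)) := xcl b 0%N _ Bb erefl.
by rewrite -(proj1 (closure_id _) (open_closedC oW)); apply.
Qed.

Lemma core_compact : compact core.
Proof.
move=> G PG Gcore; case: B_base => [[b1 Bb1] _ _].
have [|||x xcl] := @hit_cluster [set O | open O /\ G O].
- by exists setT; split; [exact: openT | exact: filterT].
- move=> O1 O2 [oO1 GO1] [oO2 GO2]; exists (O1 `&` O2) => //.
  by split; [exact: openI | exact: filterI].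
- move=> b n O Bb [oO GO]; have [a [Oa corea]] := filter_ex (filterI GO Gcore).
  have [z [hz Oz]] := corea b n Bb O (open_nbhs_nbhs (conj oO Oa)).
  by exists z.
exists x; split.
  by move=> b n Bb; apply: closureS (xcl b n setT Bb (conj openT filterT)) => t [].
move=> C N GC Nx; apply: contrapT => CN.
have [P [V [oP oV Px NV PV]]] := (regular_openP x).1 (regX x) (~` N°)
  (open_closedC (@open_interior _ N)) (fun nN => nN Nx).
have GV : G V.
  by apply: filterS GC => c Cc; apply: NV => /interior_subset Nc; apply: CN; exists c.
have [z [[_ Vz] Pz]] := xcl b1 0%N V Bb1 (conj oV GV) P (open_nbhs_nbhs (conj oP Px)).
by have : (P `&` V) z by []; rewrite PV.
Qed.

Lemma nondegenerate_cluster : exists y, cluster_point B y.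
Proof.
apply: (compact_filter_base_cluster (@cset_compact _ (F (Cpt core_compact))) B_base).
move=> b Bb.
apply: usc_meets_closure => // W oW coreW; exact: core_cover.
Qed.

End NonDegenerate.

Lemma subtree_mesh_cluster : exists y, cluster_point B y.
Proof.
have [F0B|] := pselect (forall b, B b -> (F (cpt0 X) : set Y) `&` b !=set0).
  apply: (compact_filter_base_cluster (@cset_compact _ (F (cpt0 X))) B_base) => b Bb.
  by have [y [Fy yb]] := F0B b Bb; exists y; split => //; exact: subset_closure.
by move=> /existsNP [b0 /not_implyP [Bb0 F0b0]]; exact: nondegenerate_cluster Bb0 F0b0.
Qed.

End ImageCluster.

Lemma finite_image_list {T : choiceType} {I : Type} {V : I -> T} {S : set I}
    {E : set T} :
  finite_set E -> E `<=` V @` S ->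
  exists l : list I, (forall i, List.In i l -> S i) /\ V @` [set i | List.In i l] = E.
Proof.
move=> /finite_fsetP [B ->]; rewrite -[[set` B]]/[set` (B : seq T)].
elim: (B : seq T) => [|e t IH] tS.
  by exists nil; split => //; apply/seteqP; split => x; [case | rewrite /= in_nil].
have [l [lS lt]] := IH (fun x (xt : x \in t) => tS x (mem_behead (s := e :: t) xt)).
have [i Si <-] := tS e (mem_head _ _).
exists (i :: l); split; first by move=> j [<-|/lS].
apply/seteqP; split => x.
- move=> [j [<-|jl] <-]; rewrite /= inE ?eqxx //; apply/orP; right.
  have : (V @` [set i | List.In i l]) (V j) by exists j.
  by rewrite lt.
- rewrite /= inE => /orP [/eqP ->|xt]; first by exists i; [left|].
  by have : [set` t] x := xt; rewrite -lt => -[j jl <-]; exists j; [right|].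
Qed.

Section SieveImage.
Variables (X Y : topologicalType) (F : cpt X -> cpt Y).
Variables (A : nat -> Type) (U : forall n, A n -> set X)
  (pi : forall n, A n.+1 -> A n).
Hypothesis sieveU : is_sieve U pi.
Variable s : set X -> set Y.
Hypothesis s_open : forall V, open V -> open (s V).
Hypothesis s_setT : s setT = setT.
Hypothesis s_mono : forall V W, open V -> open W -> V `<=` W -> s V `<=` s W.
Hypothesis s_finite : forall (V : set X) (y : Y) (W : set (set X)),
  open V -> s V y -> (forall w, W w -> open w) ->
  Fpre F y V `<=` \bigcup_(w in W) w ->
  exists E : set (set X), [/\ finite_set E, E `<=` W & s (\bigcup_(e in E) e) y].
Local Set Implicit Arguments.
Local Unset Strict Implicit.

Lemma s_finite_list n (S : set (A n)) (V : set X) y :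
  open V -> s V y -> V `<=` \bigcup_(b in S) U n b ->
  exists l : list (A n), (forall b, List.In b l -> S b) /\
    s (\bigcup_(b in [set b | List.In b l]) U n b) y.
Proof.
move=> oV sVy VS.
have Fpre_sub : Fpre F y V `<=` \bigcup_(w in U n @` S) w.
  by move=> x [K [_ KV Kx]]; have [b Sb Ub] := VS x (KV x Kx); exists (U n b) => //; exists b.
have W_open w : (U n @` S) w -> open w by move=> [b _ <-]; exact: (sieve_open sieveU).
have [E [finE EW sEy]] := s_finite _ _ _ oV sVy W_open Fpre_sub.
have [l [lS lE]] := finite_image_list finE EW.
by exists l; split => //; rewrite -lE bigcup_image in sEy.
Qed.

(* Levels above [n] must be empty: otherwise [E] would be the truncation of no
   deeper index and the sieve equation [Vtree_pi] would fail. *)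
Definition subtree n (E : forall k, list (A k)) :=
  (forall k, (k < n)%N -> forall b, List.In b (E k.+1) -> List.In (pi k b) (E k)) /\
  (forall k, (n < k)%N -> E k = nil).

Definition ftree n := {E | subtree n E}.

Definition Vtree n (E : ftree n) := s (UE U (sval E) n).

Definition trunc n (E : forall k, list (A k)) k := if (k <= n)%N then E k else nil.

Lemma subtree_trunc n E : subtree n.+1 E -> subtree n (trunc n E).
Proof.
move=> [Epi Enil]; split => k kn; rewrite /trunc.
  by rewrite kn (ltnW kn); exact: Epi k (ltnW kn).
by rewrite leqNgt kn.
Qed.

Definition ftree_pi n (E : ftree n.+1) : ftree n :=
  exist _ (trunc n (sval E)) (subtree_trunc (svalP E)).

Lemma ftree_eq n (E1 E2 : ftree n) : sval E1 = sval E2 -> E1 = E2.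
Proof.
by case: E1 E2 => [e1 p1] [e2 p2] /= e12; subst e2; congr exist; exact: Prop_irrelevance.
Qed.

Lemma subtree_grow n E l : subtree n E ->
    (forall b, List.In b l -> List.In (pi n b) (E n)) ->
  subtree n.+1 (dfwith E n.+1 l) /\ trunc n (dfwith E n.+1 l) = E.
Proof.
move=> [Epi Enil] lE; have Eout k : n.+1 != k -> dfwith E n.+1 l k = E k.
  exact: dfwithout.
split; last first.
  apply: functional_extensionality_dep => k; rewrite /trunc.
  by case: ifP => kn; [rewrite Eout // | rewrite Enil //]; lia.
split=> k kn.
  have [->|kn'] := eqVneq k n; first by rewrite dfwithin Eout //; lia.
  by rewrite !Eout; [apply: Epi; lia | lia | lia].
by rewrite Eout ?Enil //; lia.
Qed.

Lemma Vtree_pi n (E : ftree n) :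
  Vtree E = \bigcup_(E' in [set E' | ftree_pi E' = E]) Vtree E'.
Proof.
case: sieveU => _ _ Upi; case: E => E Etree; apply/seteqP; split => y.
- move=> sEy; have UES : UE U E n `<=` \bigcup_(b in [set b | List.In (pi n b) (E n)]) U n.+1 b.
    by move=> x [a Ea]; rewrite (Upi n a) => -[b /= pba Ub]; exists b; rewrite /= ?pba.
  have [l [lE sly]] := s_finite_list (UE_open sieveU E n) sEy UES.
  have [Egrow Etrunc] := subtree_grow Etree lE.
  exists (exist _ _ Egrow); first exact: ftree_eq.
  by rewrite /Vtree /UE /= dfwithin.
- move=> [[E' E'tree] /= E'E]; apply: s_mono (UE_open sieveU _ _) (UE_open sieveU _ _) _ _.
  move=> x [b E'b Ub]; exists (pi n b); last exact: (@sieve_pi _ _ _ _ sieveU n b x Ub).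
  have E'En : E' n = E n.
    by have := congr1 (fun T : ftree n => sval T n) E'E; rewrite /= /trunc leqnn.
  by rewrite /= -E'En; case: (E'tree) => E'pi _; exact: E'pi.
Qed.

Lemma sieve_Vtree : is_sieve Vtree ftree_pi.
Proof.
split => [n E|n|]; last exact: Vtree_pi.
  by apply: s_open; exact: (UE_open sieveU (sval E) n).
apply/seteqP; split => // y _; elim: n => [|n].
  have UT : [set: X] `<=` \bigcup_(a in [set: A 0]) U 0%N a.
    by case: sieveU => _ -> _.
  have sTy : s setT y by rewrite s_setT.
  have [l [_ sly]] := s_finite_list openT sTy UT.
  have E0 : subtree 0 (@dfwith _ (fun k => list (A k)) (fun k => nil) 0%N l).
    by split => // k k0; rewrite dfwithout //; lia.
  by exists (exist _ _ E0) => //; rewrite /Vtree /UE /= dfwithin.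
by move=> [E _]; rewrite Vtree_pi => -[E' _ yE']; exists E'.
Qed.

Hypothesis regX : regular_space X.
Hypothesis uscF : usc F.
Hypothesis s_img : forall V, open V -> s V `<=` Fimg F V.

Lemma complete_sieve_Vtree : complete_sieve U pi -> complete_sieve Vtree ftree_pi.
Proof.
move=> completeU; split; first exact: sieve_Vtree.
move=> beta beta_pi B B_base B_mesh.
pose E k := sval (beta k) k.
have E_pi n b : List.In b (E n.+1) -> List.In (pi n b) (E n).
  rewrite /E -(beta_pi n) /= /trunc leqnn.
  by case: (svalP (beta n.+1)) => Epi _; exact: Epi.
apply: (subtree_mesh_cluster regX uscF completeU E_pi s_img B_base).
by move=> b n Bb; apply: B_mesh => //; exists n.
Qed.

End SieveImage.

Theorem corollary3p6 (X Y : topologicalType) (F : cpt X -> cpt Y) :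
  completely_regular X -> completely_regular Y ->
  sieve_complete X -> usc F -> set_tri_quotient F ->
  sieve_complete Y.
Proof.
move=> crX _ [A [U [pi completeU]]] uscF [s [s_open s_img s_setT s_mono s_finite]].
exists (ftree pi), (Vtree U (pi := pi) s), (ftree_pi (pi := pi)).
exact: (complete_sieve_Vtree completeU.1 s_open s_setT s_mono s_finite
  (completely_regular_regular crX) uscF s_img completeU).
Qed.
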